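(* Let $\mathcal{U}$ be a separable Banach space with dual $\mathcal{U}^*$ and duality pairing $[\cdot,\cdot]$, with quadratic norm $\|u\|^2=[\mathcal{K}^{-1}u,u]$ given by an invertible symmetric positive linear map $\mathcal{K}:\mathcal{U}^*\to\mathcal{U}$. Let $\Omega\subseteq\mathbb{R}^d$ be bounded, consider the PDE $\mathcal{P}(u)(\mathbf{x})=f(\mathbf{x})$ for $\mathbf{x}\in\Omega$, $\mathcal{B}(u)(\mathbf{x})=g(\mathbf{x})$ for $\mathbf{x}\in\partial\Omega$, and suppose (Assumption) there exist bounded linear operators $L_1,\dots,L_Q\in\mathcal{L}(\mathcal{U};C(\Omega))$ with $L_1,\dots,L_{Q_b}\in\mathcal{L}(\mathcal{U};C(\partial\Omega))$ for some $1\le Q_b\le Q$, and maps $P:\mathbb{R}^Q\to\mathbb{R}$, $B:\mathbb{R}^{Q_b}\to\mathbb{R}$ (possibly nonlinear) with $\mathcal{P}(u)(\mathbf{x})=P(L_1(u)(\mathbf{x}),\dots,L_Q(u)(\mathbf{x}))$ for $\mathbf{x}\in\Omega$ and $\mathcal{B}(u)(\mathbf{x})=B(L_1(u)(\mathbf{x}),\dots,L_{Q_b}(u)(\mathbf{x}))$ for $\mathbf{x}\in\partial\Omega$. With collocation points, $\boldsymbol{\phi}$, $N$, $\mathbf{y}$, $F$, $\Theta$ and $\chi_n$ as in the context, assume $\Theta$ is invertible. Then $u^\dagger$ is a minimizer of $$\min_{u\in\mathcal{U}}\|u\|\ \text{ s.t. }\ \mathcal{P}(u)(\mathbf{x}_m)=f(\mathbf{x}_m),\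 m=1,\dots,M_\Omega;\quad \mathcal{B}(u)(\mathbf{x}_m)=g(\mathbf{x}_m),\ m=M_\Omega+1,\dots,M,$$ if and only if $u^\dagger=\sum_{n=1}^N z^\dagger_n\chi_n$ where $\mathbf{z}^\dagger$ is a minimizer of $\min_{\mathbf{z}\in\mathbb{R}^N}\mathbf{z}^T\Theta^{-1}\mathbf{z}$ subject to $F(\mathbf{z})=\mathbf{y}$.
   Context: Collocation points: $\mathbf{x}_1,\dots,\mathbf{x}_{M_\Omega}\in\Omega$, $\mathbf{x}_{M_\Omega+1},\dots,\mathbf{x}_M\in\partial\Omega$. Define $\phi^{(q)}_m=\delta_{\mathbf{x}_m}\circ L_q\in\mathcal{U}^*$ for $1\le m\le M$ if $1\le q\le Q_b$, and for $1\le m\le M_\Omega$ if $Q_b<q\le Q$; let $\boldsymbol{\phi}^{(q)}$ be the vector of the $\phi^{(q)}_m$ and $\boldsymbol{\phi}=(\boldsymbol{\phi}^{(1)},\dots,\boldsymbol{\phi}^{(Q)})\in(\mathcal{U}^* )^{N}$ with $N=MQ_b+M_\Omega(Q-Q_b)$. $\mathbf{y}\in\mathbb{R}^M$ has $y_m=f(\mathbf{x}_m)$ for $m\le M_\Omega$ and $y_m=g(\mathbf{x}_m)$ for $m>M_\Omega$. $F:\mathbb{R}^N\to\mathbb{R}^M$ is defined by $(F([\boldsymbol{\phi},u]))_m=P([\phi^{(1)}_m,u],\dots,[\phi^{(Q)}_m,u])$ for $m\le M_\Omega$ and $=B([\phi^{(1)}_m,u],\dots,[\phi^{(Q_b)}_m,u])$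 for $m>M_\Omega$ (i.e. $F$ acts on $\mathbf{z}\in\mathbb{R}^N$ with entries indexed like $\boldsymbol{\phi}$). $\Theta_{i,n}=[\phi_i,\mathcal{K}\phi_n]$ where $\phi_i$ are the entries of $\boldsymbol{\phi}$, and the gamblets are $\chi_i=\sum_{n=1}^N(\Theta^{-1})_{i,n}\mathcal{K}\phi_n$. The constraints of the minimization problem are thus equivalent to $F([\boldsymbol{\phi},u])=\mathbf{y}$. *)

From HB Require Import structures.
From mathcomp Require Import all_boot all_order all_algebra.
From mathcomp Require Import all_classical all_reals all_analysis.
Unset Printing Implicit Defensive.
Import Order.TTheory GRing.Theory Num.Theory.
Import numFieldNormedType.Exports.
Local Open Scope classical_set_scope.
Local Open Scope ring_scope.

(* Elements of the topological dual U^*: continuous linear functionals;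
   the duality pairing [phi, u] is function application phi u. *)
Definition is_dual (R : realType) (U : normedModType R) (phi : U -> R) : Prop :=
  (forall (a : R) (u v : U), phi (a *: u + v) = a * phi u + phi v) /\ continuous phi.

Definition bdry (T : topologicalType) (A : set T) : set T :=
  closure A `\` interior A.

(* index list of phi = (phi^(1),...,phi^(Q)): pairs (q, m) (0-based),
   m ranging over [0, M) if q < Qb and over [0, MO) otherwise *)
Definition idxs (Q Qb M MO : nat) : seq (nat * nat) :=
  flatten [seq [seq (q, m) | m <- iota 0 (if (q < Qb)%N then M else MO)] | q <- iota 0 Q].

Definition NN (Q Qb M MO : nat) : nat := size (idxs Q Qb M MO).

Definition phis (R : realType) (U : normedModType R) (d : nat)
  (L : nat -> U -> 'rV[R]_d -> R) (x : nat -> 'rV[R]_d) (Q Qb M MO : nat)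
  (n : nat) : U -> R :=
  let qm := nth (0%N, 0%N) (idxs Q Qb M MO) n in fun u => L qm.1 u (x qm.2).

Definition Theta (R : realType) (U : normedModType R) (d : nat)
  (K : (U -> R) -> U) (L : nat -> U -> 'rV[R]_d -> R) (x : nat -> 'rV[R]_d)
  (Q Qb M MO : nat) : 'M[R]_(NN Q Qb M MO) :=
  \matrix_(i, n) @phis R U d L x Q Qb M MO i (K (@phis R U d L x Q Qb M MO n)).

Definition chi (R : realType) (U : normedModType R) (d : nat)
  (K : (U -> R) -> U) (L : nat -> U -> 'rV[R]_d -> R) (x : nat -> 'rV[R]_d)
  (Q Qb M MO : nat) (i : 'I_(NN Q Qb M MO)) : U :=
  \sum_(n < NN Q Qb M MO) invmx (@Theta R U d K L x Q Qb M MO) i n *: K (@phis R U d L x Q Qb M MO n).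

(* entry of z at a nat index k (0 if out of range) *)
Definition zat (R : realType) (N : nat) (z : 'cV[R]_N) (k : nat) : R :=
  if insub k is Some i then z i ord0 else 0.

Definition Fmap (R : realType) (Q Qb M MO : nat)
  (P : 'rV[R]_Q -> R) (B : 'rV[R]_Qb -> R) (z : 'cV[R]_(NN Q Qb M MO)) (m : nat) : R :=
  if (m < MO)%N then P (\row_(q < Q) @zat R (NN Q Qb M MO) z (index (val q, m) (idxs Q Qb M MO)))
  else B (\row_(q < Qb) @zat R (NN Q Qb M MO) z (index (val q, m) (idxs Q Qb M MO))).

Arguments is_dual {R U}.
Arguments bdry {T}.
Arguments phis {R U d}.
Arguments Theta {R U d}.
Arguments chi {R U d}.
Arguments zat {R N}.
Arguments Fmap {R}.

From HB Require Import structures.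
From mathcomp Require Import all_boot all_order all_algebra.
From mathcomp Require Import all_classical all_reals all_analysis.
From mathcomp Require Import ring.
Import Order.TTheory GRing.Theory Num.Theory.
Import numFieldNormedType.Exports.
Local Open Scope classical_set_scope.
Local Open Scope ring_scope.

(* Let meas u = (phi_n u)_n.  For z a column vector, recon z = sum_n z_n chi_n equals K psi_z
   with psi_z = sum_n (Theta^-1 z)_n phi_n, and meas (recon z) = z.  Splitting
   u = recon (meas u) + w gives meas w = 0, hence psi_z w = 0, and symmetry of K turns this
   into K-orthogonality:  ||u||^2 = z^T Theta^-1 z + ||w||^2  with z = meas u.  The
   collocation constraints only see u through F (meas u), so a constrained minimizer has
   w = 0, and minimizing ||u|| amounts to minimizing z^T Theta^-1 z subject to F z = y. *)

Section DualSpace.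
Variables (R : realType) (U : normedModType R).
Implicit Types (phi psi : U -> R) (u v : U).

Lemma is_dual0 : is_dual (fun _ : U => 0 : R).
Proof. by split; [move=> *; rewrite mulr0 addr0 | exact: cst_continuous]. Qed.

Lemma is_dual_lincomb (a : R) phi psi :
  is_dual phi -> is_dual psi -> is_dual (fun v => a * phi v + psi v).
Proof.
move=> [linp cp] [linq cq]; split.
  by move=> b u v /=; rewrite linp linq; ring.
move=> v; apply: (@continuousD _ _ _ (fun v => a * phi v) psi); last exact: cq.
by apply: (@continuousM _ _ (fun=> a) phi); [exact: cst_continuous | exact: cp].
Qed.

Lemma is_dual_sum (I : Type) (r : seq I) (a : I -> R) (phi : I -> U -> R) :
  (forall i, is_dual (phi i)) -> is_dual (fun v => \sum_(i <- r) a i * phi i v).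
Proof.
move=> phi_dual; elim: r => [|i r IHr].
  by under eq_fun do rewrite big_nil; exact: is_dual0.
by under eq_fun do rewrite big_cons; exact: is_dual_lincomb.
Qed.

Lemma is_dualD phi u v : is_dual phi -> phi (u + v) = phi u + phi v.
Proof. by move=> [lin _]; have := lin 1 u v; rewrite scale1r mul1r. Qed.

Lemma is_dualB phi u v : is_dual phi -> phi (u - v) = phi u - phi v.
Proof.
by move=> [lin _]; have := lin (-1) v u; rewrite scaleN1r mulN1r addrC => ->; rewrite addrC.
Qed.

Lemma bounded_linear_is_dual phi (C : R) :
  (forall a u v, phi (a *: u + v) = a * phi u + phi v) ->
  (forall u, `|phi u| <= C * `|u|) -> is_dual phi.
Proof.
move=> lin bnd; split => //.
pose phiL : {linear U -> R^o} := HB.pack phi (GRing.isLinear.Build _ _ _ _ phi lin).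
apply: (@bounded_linear_continuous _ _ _ phiL); apply/linear_boundedP.
exists C; split; first exact: num_real.
move=> r /ltW Cr u; apply: le_trans (bnd u) _.
by apply: ler_wpM2r.
Qed.

End DualSpace.

Section Representer.
Context {R : realType} {U : normedModType R}.
Context {K : (U -> R) -> U} {Kinv : U -> U -> R}.
Hypothesis K_lincomb : forall (a : R) (phi psi : U -> R), is_dual phi -> is_dual psi ->
  K (fun v => a * phi v + psi v) = a *: K phi + K psi.
Hypothesis KinvK : forall phi : U -> R, is_dual phi -> Kinv (K phi) = phi.
Hypothesis Kinv_dual : forall u : U, is_dual (Kinv u).
Hypothesis KKinv : forall u : U, K (Kinv u) = u.
Hypothesis K_sym : forall phi psi : U -> R, is_dual phi -> is_dual psi ->
  phi (K psi) = psi (K phi).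
Hypothesis normE : forall u : U, `|u| ^+ 2 = Kinv u u.

Lemma K0 : K (fun _ => 0) = 0.
Proof.
have := @K_lincomb 1 _ _ (is_dual0 R U) (is_dual0 R U).
under eq_fun do rewrite mulr0 addr0.
by rewrite scale1r => /esym/(canRL (addrK _)) ->; rewrite subrr.
Qed.

Lemma K_sum (I : Type) (r : seq I) (a : I -> R) (phi : I -> U -> R) :
  (forall i, is_dual (phi i)) ->
  K (fun v => \sum_(i <- r) a i * phi i v) = \sum_(i <- r) a i *: K (phi i).
Proof.
move=> phi_dual; elim: r => [|i r IHr].
  by under eq_fun do rewrite big_nil; rewrite big_nil K0.
under eq_fun do rewrite big_cons.
by rewrite K_lincomb ?IHr ?big_cons //; exact: is_dual_sum.
Qed.

Context {N : nat} {phi : 'I_N -> U -> R}.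
Hypothesis phi_dual : forall i, is_dual (phi i).

Definition meas (u : U) : 'cV[R]_N := \col_i phi i u.

Definition gram : 'M[R]_N := \matrix_(i, n) phi i (K (phi n)).

Hypothesis gram_unit : gram \in unitmx.

Definition gamblet (i : 'I_N) : U := \sum_n invmx gram i n *: K (phi n).

Definition recon (z : 'cV[R]_N) : U := \sum_n z n ord0 *: gamblet n.

Definition qform (z : 'cV[R]_N) : R := (z^T *m invmx gram *m z) ord0 ord0.

(* The transpose avoids having to show that gram is symmetric. *)
Definition recon_dual (z : 'cV[R]_N) (v : U) : R :=
  \sum_n ((invmx gram)^T *m z) n ord0 * phi n v.

Lemma recon_dual_dual z : is_dual (recon_dual z).
Proof. exact: is_dual_sum. Qed.

Lemma recon_dualE z v : recon_dual z v = (z^T *m invmx gram *m meas v) ord0 ord0.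
Proof.
rewrite mxE; apply: eq_bigr => n _; rewrite !mxE; congr (_ * _).
by apply: eq_bigr => k _; rewrite !mxE mulrC.
Qed.

Lemma measB u v : meas (u - v) = meas u - meas v.
Proof. by apply/colP => i; rewrite !mxE is_dualB. Qed.

Lemma recon_K z : recon z = K (recon_dual z).
Proof.
rewrite K_sum // /recon /gamblet.
under eq_bigr do rewrite scaler_sumr.
rewrite exchange_big /=; apply: eq_bigr => n _; rewrite mxE scaler_suml.
by apply: eq_bigr => k _; rewrite scalerA !mxE mulrC.
Qed.

Lemma meas_recon z : meas (recon z) = z.
Proof.
apply/colP => j; rewrite mxE recon_K K_sym //; last exact: recon_dual_dual.
rewrite -[in RHS](mul1mx z) -trmx1 -(mulVmx gram_unit) trmx_mul -mulmxA mxE.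
by apply: eq_bigr => n _; rewrite !mxE mulrC.
Qed.

Lemma norm_pythagoras u :
  `|u| ^+ 2 = qform (meas u) + `|u - recon (meas u)| ^+ 2.
Proof.
set z := meas u; set w := u - recon z.
have [z_dual w_dual] := (recon_dual_dual z, Kinv_dual w).
have u_split : u = K (recon_dual z) + w by rewrite -recon_K /w addrC subrK.
have Kinv_u : Kinv u = fun v => 1 * recon_dual z v + Kinv w v.
  rewrite {1}u_split -{1}(KKinv w) -[K (recon_dual z)]scale1r -K_lincomb //.
  by rewrite KinvK //; exact: is_dual_lincomb.
have meas_w : meas w = 0 by rewrite measB meas_recon subrr.
rewrite !normE Kinv_u mul1r recon_dualE -/z -/(qform z).
rewrite {1}u_split is_dualD // K_sym // KKinv.
by rewrite recon_dualE meas_w mulmx0 mxE add0r.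
Qed.

Lemma norm_recon z : `|recon z| ^+ 2 = qform z.
Proof. by rewrite norm_pythagoras meas_recon subrr normr0 expr0n addr0. Qed.

Lemma min_norm_recon (C : 'cV[R]_N -> Prop) (u : U) :
  (C (meas u) /\ forall v, C (meas v) -> `|u| <= `|v|) <->
  exists z, (C z /\ forall z', C z' -> qform z <= qform z') /\ u = recon z.
Proof.
split=> [[Cu u_min]|[z [[Cz z_min] ->]]].
- have qform_min z' : C z' -> `|u| ^+ 2 <= qform z'.
    by move=> Cz'; rewrite -norm_recon ler_sqr ?nnegrE // u_min ?meas_recon.
  exists (meas u); split; first split => // z' Cz'.
    by apply: le_trans (qform_min z' Cz'); rewrite norm_pythagoras lerDl sqr_ge0.
  have := qform_min _ Cu; rewrite norm_pythagoras gerDl.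
  move=> w_le0; apply/eqP; rewrite -subr_eq0 -normr_eq0 -sqrf_eq0.
  by rewrite eq_le w_le0 sqr_ge0.
- split=> [|v Cv]; first by rewrite meas_recon.
  rewrite -ler_sqr ?nnegrE // norm_recon (le_trans (z_min _ Cv)) //.
  by rewrite norm_pythagoras lerDl sqr_ge0.
Qed.

End Representer.

Section Collocation.
Context {R : realType} {U : normedModType R} {d : nat}.
Context {Q Qb M MO : nat} {L : nat -> U -> 'rV[R]_d -> R} {x : nat -> 'rV[R]_d}.

Lemma mem_idxs q m :
  ((q, m) \in idxs Q Qb M MO) = (q < Q)%N && (m < if (q < Qb)%N then M else MO)%N.
Proof.
apply/flatten_mapP/andP => [[q' + /mapP [m' + [-> ->]]]|[qQ mlt]].
  by rewrite !mem_iota.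
by exists q; rewrite ?mem_iota //; apply/mapP; exists m; rewrite ?mem_iota.
Qed.

Lemma phis_dual {Omega Gamma : set 'rV[R]_d} :
  (forall q, (q < Q)%N -> forall (a : R) (u v : U),
     L q (a *: u + v) = (fun y => a * L q u y + L q v y)) ->
  (forall q, (q < Q)%N -> exists C : R, forall u y, Omega y -> `|L q u y| <= C * `|u|) ->
  (forall q, (q < Qb)%N -> exists C : R, forall u y, Gamma y -> `|L q u y| <= C * `|u|) ->
  (forall m, (m < MO)%N -> Omega (x m)) ->
  (forall m, (MO <= m < M)%N -> Gamma (x m)) ->
  forall i : 'I_(NN Q Qb M MO), is_dual (phis L x Q Qb M MO i).
Proof.
move=> L_lin L_bnd L_bndG xO xG i.
have := mem_nth (0, 0)%N (ltn_ord i); rewrite /phis; case: nth => q m /=.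
rewrite mem_idxs => /andP [qQ mlt].
have lin a u v : L q (a *: u + v) (x m) = a * L q u (x m) + L q v (x m).
  by rewrite L_lin.
have [mMO | MOm] := ltnP m MO.
  have [C bnd] := L_bnd q qQ.
  by apply: (@bounded_linear_is_dual _ _ _ C lin) => u; apply/bnd/xO.
move: mlt; case: ifP => [qQb mM | _]; last by rewrite ltnNge MOm.
have [C bnd] := L_bndG q qQb.
by apply: (@bounded_linear_is_dual _ _ _ C lin) => u; apply/bnd/xG; rewrite MOm.
Qed.

Lemma zat_meas (u : U) qm : qm \in idxs Q Qb M MO ->
  zat (\col_(i < NN Q Qb M MO) phis L x Q Qb M MO i u) (index qm (idxs Q Qb M MO)) =
  L qm.1 u (x qm.2).
Proof.
move=> qm_in; rewrite /zat; case: insubP => [i _ iE|]; last by rewrite index_mem qm_in.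
by rewrite mxE /phis iE nth_index.
Qed.

Context {Omega Gamma : set 'rV[R]_d} {P : 'rV[R]_Q -> R} {B : 'rV[R]_Qb -> R}.
Context {calP calB : U -> 'rV[R]_d -> R}.
Hypothesis Qb_le_Q : (Qb <= Q)%N.
Hypothesis calPE : forall u y, Omega y -> calP u y = P (\row_(q < Q) L (val q) u y).
Hypothesis calBE : forall u y, Gamma y -> calB u y = B (\row_(q < Qb) L (val q) u y).
Hypothesis MO_le_M : (MO <= M)%N.
Hypothesis xO : forall m, (m < MO)%N -> Omega (x m).
Hypothesis xG : forall m, (MO <= m < M)%N -> Gamma (x m).

Lemma Fmap_meas (u : U) m : (m < M)%N ->
  Fmap Q Qb M MO P B (\col_(i < NN Q Qb M MO) phis L x Q Qb M MO i u) m =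
  if (m < MO)%N then calP u (x m) else calB u (x m).
Proof.
move=> mM; rewrite /Fmap; case: ifP => mMO.
  rewrite calPE; last exact: xO.
  congr P; apply/rowP => q; rewrite !mxE zat_meas //.
  by rewrite mem_idxs ltn_ord; case: ifP.
rewrite calBE; last by apply: xG; rewrite leqNgt mMO.
congr B; apply/rowP => q; rewrite !mxE zat_meas //.
by rewrite mem_idxs ltn_ord (leq_trans (ltn_ord q)).
Qed.

Lemma collocation_constraintsE (f g : 'rV[R]_d -> R) (u : U) :
  ((forall m, (m < MO)%N -> calP u (x m) = f (x m)) /\
   (forall m, (MO <= m < M)%N -> calB u (x m) = g (x m))) <->
  (forall m, (m < M)%N ->
     Fmap Q Qb M MO P B (\col_(i < NN Q Qb M MO) phis L x Q Qb M MO i u) m =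
     if (m < MO)%N then f (x m) else g (x m)).
Proof.
split=> [[uP uB] m mM | uF].
  by rewrite Fmap_meas //; case: ltnP => [/uP // | MOm]; apply: uB; rewrite MOm.
split=> [m mMO | m /andP [MOm mM]].
  by have := uF m (leq_trans mMO MO_le_M); rewrite Fmap_meas ?mMO ?(leq_trans mMO).
by have := uF m mM; rewrite Fmap_meas // ltnNge MOm.
Qed.

End Collocation.

Theorem corollary3p2 (R : realType) (U : completeNormedModType R)
  (K : (U -> R) -> U) (Kinv : U -> (U -> R))
  (d : nat) (Omega : set 'rV[R]_d)
  (Q Qb : nat) (L : nat -> U -> 'rV[R]_d -> R)
  (P : 'rV[R]_Q -> R) (B : 'rV[R]_Qb -> R)
  (calP calB : U -> 'rV[R]_d -> R) (f g : 'rV[R]_d -> R)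
  (M MO : nat) (x : nat -> 'rV[R]_d) :
  (* U separable *)
  (exists D : set U, countable D /\ closure D = setT) ->
  (* K : U^* -> U linear, invertible, symmetric, positive *)
  (forall (a : R) (phi psi : U -> R), is_dual phi -> is_dual psi ->
     K (fun v => a * phi v + psi v) = a *: K phi + K psi) ->
  (forall phi : U -> R, is_dual phi -> Kinv (K phi) = phi) ->
  (forall u : U, is_dual (Kinv u) /\ K (Kinv u) = u) ->
  (forall phi psi : U -> R, is_dual phi -> is_dual psi -> phi (K psi) = psi (K phi)) ->
  (forall phi : U -> R, is_dual phi -> phi <> (fun _ => 0) -> 0 < phi (K phi)) ->
  (* quadratic norm ||u||^2 = [K^{-1} u, u] *)
  (forall u : U, `|u| ^+ 2 = Kinv u u) ->
  (* Omega bounded *)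
  bounded_set Omega ->
  (* 1 <= Qb <= Q *)
  (1 <= Qb)%N -> (Qb <= Q)%N ->
  (* L_q in L(U; C(Omega)) for q < Q *)
  (forall q, (q < Q)%N ->
     (forall (a : R) (u v : U), L q (a *: u + v) = (fun y => a * L q u y + L q v y)) /\
     (forall u, {within Omega, continuous (L q u)}) /\
     (exists C : R, forall u y, Omega y -> `|L q u y| <= C * `|u|)) ->
  (* L_q in L(U; C(boundary Omega)) for q < Qb *)
  (forall q, (q < Qb)%N ->
     (forall u, {within bdry Omega, continuous (L q u)}) /\
     (exists C : R, forall u y, bdry Omega y -> `|L q u y| <= C * `|u|)) ->
  (* structure of the PDE operators *)
  (forall u y, Omega y -> calP u y = P (\row_(q < Q) L (val q) u y)) ->
  (forall u y, bdry Omega y -> calB u y = B (\row_(q < Qb) L (val q) u y)) ->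
  (* collocation points *)
  (MO <= M)%N ->
  (forall m, (m < MO)%N -> Omega (x m)) ->
  (forall m, (MO <= m < M)%N -> bdry Omega (x m)) ->
  (* Theta invertible *)
  Theta K L x Q Qb M MO \in unitmx ->
  forall udag : U,
    ((forall m, (m < MO)%N -> calP udag (x m) = f (x m)) /\
     (forall m, (MO <= m < M)%N -> calB udag (x m) = g (x m)) /\
     (forall u : U,
        (forall m, (m < MO)%N -> calP u (x m) = f (x m)) ->
        (forall m, (MO <= m < M)%N -> calB u (x m) = g (x m)) ->
        `|udag| <= `|u|))
    <->
    (exists zdag : 'cV[R]_(NN Q Qb M MO),
       ((forall m, (m < M)%N ->
           Fmap Q Qb M MO P B zdag m = (if (m < MO)%N then f (x m) else g (x m))) /\
        (forall z : 'cV[R]_(NN Q Qb M MO),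
           (forall m, (m < M)%N ->
              Fmap Q Qb M MO P B z m = (if (m < MO)%N then f (x m) else g (x m))) ->
           (zdag^T *m invmx (Theta K L x Q Qb M MO) *m zdag) ord0 ord0
           <= (z^T *m invmx (Theta K L x Q Qb M MO) *m z) ord0 ord0)) /\
       udag = \sum_(n < NN Q Qb M MO) zdag n ord0 *: chi K L x Q Qb M MO n).
Proof.
move=> _ K_lincomb KinvK Kinv_spec K_sym _ normE _ _ Qb_le_Q L_op L_opG calPE calBE
  MO_le_M xO xG Theta_unit udag.
have phi_dual := phis_dual (fun q qQ => (L_op q qQ).1) (fun q qQ => (L_op q qQ).2.2)
  (fun q qQb => (L_opG q qQb).2) xO xG.
have constraintsE := collocation_constraintsE (L := L) (P := P) (B := B)
  Qb_le_Q calPE calBE MO_le_M xO xG f g.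
apply: (iff_trans _ (min_norm_recon K_lincomb KinvK (fun u => (Kinv_spec u).1)
  (fun u => (Kinv_spec u).2) K_sym normE phi_dual Theta_unit _ udag)).
split=> [[uP [uB u_min]] | [/constraintsE [uP uB] u_min]].
- split; first by apply/constraintsE.
  by move=> v /constraintsE [vP vB]; exact: u_min.
- by split=> //; split=> // v vP vB; apply/u_min/constraintsE.
Qed.
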